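(* Let $r\ge2$ and $\ell\ge r-1$. Then every semi-valid tuple of length $2\ell+1$ in $\Omega_n$ is $r$-valid.
   Context: $\Omega_n=\{v_0,\dots,v_{n-1}\}$ with cyclic order $v_0<\dots<v_{n-1}<v_0$. For distinct vertices $u,w$, $[u,w]$ is the set consisting of $u$, $w$ and all vertices met when moving clockwise from $u$ to $w$. A tuple $C=(w_1,\dots,w_{2\ell+1})$ of distinct vertices is semi-valid if $w_1<w_3<\dots<w_{2\ell+1}<w_2<w_4<\dots<w_{2\ell}<w_1$ in clockwise cyclic order, and $r$-valid if moreover $|[w_i,w_{i-1}]|\ge r$ for all $i$ (indices mod $2\ell+1$). *)

From mathcomp Require Import all_boot.
Set Implicit Arguments. Unset Strict Implicit. Unset Printing Implicit Defensive.

(* Omega_n = 'I_n, with cyclic (clockwise) order v_0 < v_1 < ... < v_{n-1} < v_0. *)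

Definition cdist (n : nat) (u v : 'I_n) : nat := (v + n - u) %% n.

(* the sequence s lists distinct vertices in clockwise cyclic order,
   i.e. walking clockwise from the first element one meets them in order *)
Definition cyc_ordered (n : nat) (s : seq 'I_n) : bool :=
  match s with
  | [::] => true
  | x :: _ => uniq s && sorted ltn [seq cdist x y | y <- s]
  end.

Definition cint (n : nat) (u w : 'I_n) : {set 'I_n} :=
  [set v | cdist u v <= cdist u w].

(* A tuple C = (w_1, ..., w_{2l+1}) is a function w : 'I_(2l+1) -> 'I_n,
   with w_{k+1} = w k (0-based indices). *)
Definition semi_valid (n l : nat) (w : 'I_(l.*2.+1) -> 'I_n) : bool :=
  injectiveb w &&
  cyc_ordered ([seq w (inord k.*2) | k <- iota 0 l.+1]
               ++ [seq w (inord k.*2.+1) | k <- iota 0 l]).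

Definition prev_idx (l : nat) (i : 'I_(l.*2.+1)) : 'I_(l.*2.+1) :=
  inord ((i + l.*2) %% l.*2.+1).

Definition r_valid (n l r : nat) (w : 'I_(l.*2.+1) -> 'I_n) : bool :=
  semi_valid w &&
  [forall i : 'I_(l.*2.+1), r <= #|cint (w i) (w (prev_idx i))|].

From mathcomp Require Import all_boot.
From mathcomp Require Import zify.

(* Index the tuple from 0 as w_0, ..., w_{2l}.  Semi-validity
   says that the listing s = (w_0, w_2, ..., w_{2l}, w_1, w_3, ..., w_{2l-1})
   is cyclically ordered.  The vertex w_j sits at position
   pos j = j(l+1) mod (2l+1) of s: as 2(l+1) = 1 mod 2l+1, stepping from w_j
   to w_{j+2} advances the position by one.  Hence w_{i-1} = w_{i+2l} sits
   l positions after w_i (cyclically), so the arc [w_i, w_{i-1}] contains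
   the l+1 entries of s between them, and l+1 >= r. *)

Lemma cdistE n (u v : 'I_n) :
  cdist u v = if u <= v then v - u else v + n - u.
Proof.
rewrite /cdist; have hu := ltn_ord u; have hv := ltn_ord v.
case: leqP => uv; last by rewrite modn_small //; lia.
have -> : v + n - u = (v - u) + n by lia.
by rewrite modnDr modn_small //; lia.
Qed.

(* [on_arc a b c]: going up from a and wrapping around, one meets b no
   later than c; the cyclic order on nat induced by its linear order. *)
Definition on_arc (a b c : nat) : bool :=
  [|| a <= b <= c, c < a <= b | b <= c < a].

Lemma on_arc_homo (N : nat) (f : nat -> nat) (a b c : nat) :
  {in [pred k | k < N] &, {homo f : i j / i < j}} ->
  a < N -> b < N -> c < N -> on_arc a b c -> on_arc (f a) (f b) (f c).
Proof.
move=> /leq_mono_in mono_le ha hb hc.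
have /leqW_mono_in mono_lt := mono_le.
by rewrite /on_arc !mono_le ?inE // !mono_lt ?inE.
Qed.

Lemma mem_cint_arc (n : nat) (x a b c : 'I_n) :
  on_arc (cdist x a) (cdist x c) (cdist x b) -> c \in cint a b.
Proof.
rewrite /on_arc inE !cdistE.
have := ltn_ord x; have := ltn_ord a; have := ltn_ord b; have := ltn_ord c.
by case: (leqP x a); case: (leqP x b); case: (leqP x c);
   case: (leqP a b); case: (leqP a c); lia.
Qed.

Lemma on_arc_shift (m a t u : nat) :
  a < m -> t <= u -> u < m -> on_arc a ((a + t) %% m) ((a + u) %% m).
Proof.
move=> am tu um.
have wrap k : k < m -> (a + k) %% m = if a + k < m then a + k else a + k - m.
  move=> km; case: ltnP => akm; first by rewrite modn_small.
  by rewrite -[in LHS](subnK akm) modnDr modn_small //; lia.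
rewrite /on_arc !wrap //; [|lia].
by case: ifP => ?; case: ifP => ?; lia.
Qed.

Lemma cyc_ordered_cint (n : nat) (s : seq 'I_n) (x0 : 'I_n) (i j k : nat) :
  cyc_ordered s -> i < size s -> j < size s -> k < size s -> on_arc i j k ->
  nth x0 s j \in cint (nth x0 s i) (nth x0 s k).
Proof.
case: s => [//|y s'] /andP [_ sorted_dist] hi hj hk arc.
set s := y :: s' in sorted_dist hi hj hk *.
pose dist k := cdist y (nth x0 s k).
have dist_homo : {in [pred k | k < size s] &, {homo dist : i j / i < j}}.
  move=> i' j' hi' hj' ij; rewrite /dist -!(nth_map x0 0 (cdist y)) //.
  by apply: sorted_ltn_nth ltn_trans _ _ sorted_dist _ _ _ _ ij;
     rewrite inE size_map.
apply: (@mem_cint_arc _ y).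
by have := on_arc_homo _ _ _ _ _ dist_homo hi hj hk arc.
Qed.

Lemma cyc_ordered_card_cint (n : nat) (s : seq 'I_n) (x0 : 'I_n) (a u : nat) :
  cyc_ordered s -> a < size s -> u < size s ->
  u.+1 <= #|cint (nth x0 s a) (nth x0 s ((a + u) %% size s))|.
Proof.
move=> cyc ha hu.
have uniq_s : uniq s by case: s cyc ha hu => //= y s' /andP [].
set N := size s; have N_gt0 : 0 < N by lia.
pose entry (t : 'I_u.+1) := nth x0 s ((a + t) %% N).
have entry_inj : injective entry.
  move=> t t' /eqP; rewrite /entry nth_uniq ?ltn_pmod // eqn_modDl.
  have := ltn_ord t; have := ltn_ord t' => ht' ht.
  by rewrite !modn_small => [/eqP/val_inj // | |]; lia.
have entries_in :
    entry @: [set: 'I_u.+1] \subset cint (nth x0 s a) (nth x0 s ((a + u) %% N)).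
  apply/subsetP => _ /imsetP [t _ ->].
  apply: cyc_ordered_cint; rewrite ?ltn_pmod //.
  by apply: on_arc_shift; rewrite // -ltnS.
by rewrite -{1}(card_ord u.+1) -cardsT -(card_imset _ entry_inj) subset_leq_card.
Qed.

(* Position of w_j in the listing defined below. *)
Definition pos (l j : nat) : nat := (j * l.+1) %% l.*2.+1.

(* Since 2(l+1) = 1 mod 2l+1, advancing the index by 2t advances the
   position by t. *)
Lemma pos_shift (l j t : nat) :
  pos l ((j + t.*2) %% l.*2.+1) = (pos l j + t) %% l.*2.+1.
Proof.
rewrite /pos modnMml modnDml mulnDl.
have -> : t.*2 * l.+1 = t * l.*2.+1 + t by lia.
by rewrite addnA [_ + t * _]addnC -addnA modnMDl.
Qed.

(* w_{i-1} = w_{i+2l}, which sits l positions after w_i. *)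
Lemma pos_prev (l : nat) (i : 'I_(l.*2.+1)) :
  pos l (prev_idx i) = (pos l i + l) %% l.*2.+1.
Proof. by rewrite /prev_idx inordK ?ltn_pmod // pos_shift. Qed.

Section Listing.

Context {n l : nat} (w : 'I_(l.*2.+1) -> 'I_n).

Definition listing : seq 'I_n :=
  [seq w (inord k.*2) | k <- iota 0 l.+1] ++ [seq w (inord k.*2.+1) | k <- iota 0 l].

Lemma size_listing : size listing = l.*2.+1.
Proof. by rewrite size_cat !size_map !size_iota; lia. Qed.

(* pos l j is indeed the position of w_j: an even j = 2k sits at k, an odd
   j = 2k+1 at l+1+k. *)
Lemma nth_listing_pos (x0 : 'I_n) (j : 'I_(l.*2.+1)) :
  nth x0 listing (pos l j) = w j.
Proof.
have -> : w j = w (inord j) by rewrite inord_val.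
have hj := ltn_ord j; rewrite /listing nth_cat size_map size_iota /pos.
have := odd_double_half j; case: (odd j) => j_eq; rewrite /= in j_eq.
- have -> : j * l.+1 = j./2 * l.*2.+1 + (l.+1 + j./2) by lia.
  rewrite modnMDl modn_small; last by lia.
  rewrite ifN -?leqNgt ?leq_addr // (nth_map 0) ?size_iota; last by lia.
  by rewrite nth_iota; [congr (w (inord _)); lia | lia].
- have -> : j * l.+1 = j./2 * l.*2.+1 + j./2 by lia.
  rewrite modnMDl modn_small; last by lia.
  rewrite ifT; last by lia.
  rewrite (nth_map 0) ?size_iota; last by lia.
  by rewrite nth_iota; [congr (w (inord _)); lia | lia].
Qed.

End Listing.

(* The arc [w_i, w_{i-1}] spans positions pos i, ..., pos i + l of the
   listing, hence contains l+1 >= r vertices. *)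
Theorem lemma3p11 (n r l : nat) (w : 'I_(l.*2.+1) -> 'I_n) :
  2 <= r -> r.-1 <= l -> semi_valid w -> r_valid r w.
Proof.
move=> _ r_le sv; rewrite /r_valid sv; apply/forallP => i.
have cyc : cyc_ordered (listing w) by case/andP: sv.
rewrite -(nth_listing_pos w (w i) i) -(nth_listing_pos w (w i) (prev_idx i)) pos_prev.
have := @cyc_ordered_card_cint _ _ (w i) (pos l i) l cyc.
rewrite size_listing ltn_pmod // => /(_ isT) arc_card.
apply: leq_trans (arc_card _); lia.
Qed.
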